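(* Let $\alpha\in(0,1)$, $f>0$, $\varpi>0$, $R>0$. There exist a threshold $p^*\in(0,1)$ and a smooth function $\hat I:[p^*,1)\to(0,+\infty)$ such that: (1) for every $p\in(0,p^* )$, $U_0(p)\ge\sup_{I\ge0}U(p,I)$ (not insuring is optimal); (2) for $p=p^*$, $U_0(p^* )=\max_{I\ge0}U(p^*,I)=U(p^*,\hat I(p^* ))$ with $\hat I(p^* )>0$ (indifference between not insuring and insuring at indemnity $\hat I(p^* )$); (3) for every $p\in(p^*,1)$, $\max_{I\ge0}U(p,I)=U(p,\hat I(p))>U_0(p)$ with $\hat I(p)>0$ (insuring at indemnity $\hat I(p)$ is optimal).
   Context: Insurance model: a good of value $\varpi$ may be totally lost. The premium for indemnity $I$ is $P(I)=\alpha I+f$. The utility is $u(w)=1-e^{-Rw}$. For a probability of loss $p\in(0,1)$, the expected utility of not insuring is $U_0(p)=(1-p)u(\varpi)+p\,u(0)=(1-p)(1-e^{-R\varpi})$, and the expected utility of insuring with indemnity $I$ is $U(p,I)=(1-p)u(\varpi-P(I))+p\,u(I-P(I))=1-p e^{-R(I-P(I))}-(1-p)e^{-R(\varpi-P(I))}$. *)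

From Stdlib Require Import Reals.
Open Scope R_scope.

Definition util (Ra w : R) : R := 1 - exp (- Ra * w).

Definition premium (alpha f I : R) : R := alpha * I + f.

Definition U0 (Ra varpi p : R) : R :=
  (1 - p) * util Ra varpi + p * util Ra 0.

Definition U (alpha f varpi Ra p I : R) : R :=
  (1 - p) * util Ra (varpi - premium alpha f I)
  + p * util Ra (I - premium alpha f I).

Definition smooth_on_open (a b : R) (h : R -> R) : Prop :=
  exists g : nat -> R -> R,
    (forall x, a < x < b -> g O x = h x) /\
    (forall n x, a < x < b -> derivable_pt_lim (g n) x (g (S n) x)).

From Stdlib Require Import Reals Lra Ranalysis5 Factorial.
From Coquelicot Require Import Coquelicot.
Open Scope R_scope.

(* Ignoring the constraint I >= 0, the expected utility U(p, .) is strictly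
   concave and its first-order condition has the closed-form solution
     opt_indemnity p = varpi + (ln p - ln (1-p) + ln ((1-alpha)/alpha)) / R,
   which is C^oo and increasing in p, and is a global maximiser of U(p, .)
   over all of R (tangent-line bound exp x >= 1 + x).  Next, for a fixed
   indemnity I the gap U0(p) - U(p,I) is affine in p and positive at p = 0
   (the fee f is paid for nothing), so once it is <= 0 at some z it is < 0
   beyond z, and once it is >= 0 at z it is > 0 before z.  The surplus
   U(p, opt_indemnity p) - U0(p) is continuous, negative where the optimal
   indemnity vanishes, and positive near p = 1; the intermediate value
   theorem yields the threshold p*, and the single-crossing property of the
   affine gap gives parts (1) and (3). *)

Section Model.

Variables alpha f varpi Ra : R.
Hypothesis Halpha : 0 < alpha < 1.
Hypothesis Hf : 0 < f.
Hypothesis HR : 0 < Ra.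

Definition opt_indemnity (p : R) : R :=
  varpi + (ln p - ln (1 - p) + ln ((1 - alpha) / alpha)) / Ra.

(* Its successive derivatives: the (m+1)-st derivative of ln p - ln (1-p)
   is m! ((-1)^m / p^(m+1) + 1 / (1-p)^(m+1)). *)
Definition opt_indemnity_deriv (n : nat) : R -> R :=
  match n with
  | O => opt_indemnity
  | S m => fun x => INR (fact m) / Ra * ((-1) ^ m / x ^ S m + / (1 - x) ^ S m)
  end.

Lemma opt_indemnity_smooth : smooth_on_open 0 1 opt_indemnity.
Proof.
  exists opt_indemnity_deriv; split; [reflexivity|].
  intros n x Hx; apply is_derive_Reals.
  destruct n as [|m]; simpl opt_indemnity_deriv.
  - unfold opt_indemnity; auto_derive.
    + repeat split; lra.
    + field; lra.
  - assert (Hxm : x ^ m <> 0) by (apply pow_nonzero; lra).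
    assert (Hym : (1 - x) ^ m <> 0) by (apply pow_nonzero; lra).
    replace (1 - x) with (1 + - x) in * by ring.
    auto_derive.
    + repeat split; apply Rmult_integral_contrapositive_currified; lra.
    + rewrite plus_INR, mult_INR.
      destruct m as [|k].
      * simpl; field; lra.
      * assert (x ^ k <> 0) by (apply pow_nonzero; lra).
        assert ((1 + - x) ^ k <> 0) by (apply pow_nonzero; lra).
        rewrite S_INR; simpl Init.Nat.pred; simpl pow.
        field; repeat split; lra.
Qed.

Lemma opt_indemnity_increasing (p q : R) :
  0 < p -> p < q -> q < 1 -> opt_indemnity p < opt_indemnity q.
Proof.
  intros Hp Hpq Hq; unfold opt_indemnity.
  assert (ln p < ln q) by (apply ln_increasing; lra).
  assert (ln (1 - q) < ln (1 - p)) by (apply ln_increasing; lra).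
  apply Rplus_lt_compat_l, Rmult_lt_compat_r; [apply Rinv_0_lt_compat|]; lra.
Qed.

Lemma opt_indemnity_pos_above (z p : R) :
  0 < z -> 0 < opt_indemnity z -> z <= p < 1 -> 0 < opt_indemnity p.
Proof.
  intros Hz Hopt [[Hzp | <-] Hp1]; [|exact Hopt].
  apply Rlt_trans with (opt_indemnity z); [exact Hopt|].
  apply opt_indemnity_increasing; lra.
Qed.

Lemma opt_indemnity_foc (p : R) : 0 < p < 1 ->
  exp (Ra * (opt_indemnity p - varpi)) = p / (1 - p) * ((1 - alpha) / alpha).
Proof.
  intros Hp; unfold opt_indemnity.
  replace (Ra * (varpi + (ln p - ln (1 - p) + ln ((1 - alpha) / alpha)) / Ra - varpi))
    with (ln p + - ln (1 - p) + ln ((1 - alpha) / alpha)) by (field; lra).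
  assert (0 < (1 - alpha) / alpha) by (apply Rdiv_lt_0_compat; lra).
  rewrite !exp_plus, exp_Ropp, !exp_ln by lra.
  field; lra.
Qed.

(* The optimal indemnity vanishes at p = 1 / (1 + exp (-y)), the inverse
   logit of y = - Ra varpi - ln ((1-alpha)/alpha). *)
Lemma opt_indemnity_root : exists p0, 0 < p0 < 1 /\ opt_indemnity p0 = 0.
Proof.
  set (y := - Ra * varpi - ln ((1 - alpha) / alpha)).
  assert (He : 0 < exp (- y)) by apply exp_pos.
  exists (/ (1 + exp (- y))).
  assert (Hp : 0 < / (1 + exp (- y)) < 1).
  { split; [apply Rinv_0_lt_compat; lra|].
    rewrite <- Rinv_1; apply Rinv_lt_contravar; lra. }
  split; [exact Hp|].
  assert (Hlogit : ln (/ (1 + exp (- y))) - ln (1 - / (1 + exp (- y))) = y).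
  { rewrite <- ln_div by lra.
    replace (/ (1 + exp (- y)) / (1 - / (1 + exp (- y)))) with (/ exp (- y))
      by (field; lra).
    rewrite <- exp_Ropp, Ropp_involutive; apply ln_exp. }
  unfold opt_indemnity; rewrite Hlogit; unfold y; field; lra.
Qed.

(* Convexity of exp through its tangent at 0: if a A = b B, the weighted sum
   A exp (a t) + B exp (-b t) is minimal at t = 0. *)
Lemma exp_weighted_pair_min (A B a b t : R) :
  0 <= A -> 0 <= B -> a * A = b * B ->
  A + B <= A * exp (a * t) + B * exp (- b * t).
Proof.
  intros HA HB Hab.
  pose proof (exp_ineq1_le (a * t)); pose proof (exp_ineq1_le (- b * t)).
  assert (A * (1 + a * t) <= A * exp (a * t)) by (apply Rmult_le_compat_l; lra).
  assert (B * (1 + - b * t) <= B * exp (- b * t)) by (apply Rmult_le_compat_l; lra).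
  assert (A * (1 + a * t) + B * (1 + - b * t) = A + B)
    by (transitivity (A + B + t * (a * A - b * B)); [ring | rewrite Hab; ring]).
  lra.
Qed.

Lemma opt_indemnity_max (p I : R) : 0 < p < 1 ->
  U alpha f varpi Ra p I <= U alpha f varpi Ra p (opt_indemnity p).
Proof.
  intros Hp; pose proof (opt_indemnity_foc p Hp) as Hfoc.
  set (J := opt_indemnity p) in *.
  set (E1 := exp (- Ra * (varpi - (alpha * J + f)))).
  set (E2 := exp (- Ra * (J - (alpha * J + f)))).
  assert (HE1 : exp (- Ra * (varpi - (alpha * I + f)))
                = E1 * exp (Ra * alpha * (I - J)))
    by (unfold E1; rewrite <- exp_plus; f_equal; ring).
  assert (HE2 : exp (- Ra * (I - (alpha * I + f)))
                = E2 * exp (- (Ra * (1 - alpha)) * (I - J)))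
    by (unfold E2; rewrite <- exp_plus; f_equal; ring).
  assert (HE12 : E1 = E2 * exp (Ra * (J - varpi)))
    by (unfold E1, E2; rewrite <- exp_plus; f_equal; ring).
  assert (Hbalance : Ra * alpha * ((1 - p) * E1) = Ra * (1 - alpha) * (p * E2))
    by (rewrite HE12, Hfoc; field; lra).
  pose proof (exp_pos (- Ra * (varpi - (alpha * J + f)))).
  pose proof (exp_pos (- Ra * (J - (alpha * J + f)))).
  pose proof (exp_weighted_pair_min ((1 - p) * E1) (p * E2)
                (Ra * alpha) (Ra * (1 - alpha)) (I - J)
                ltac:(unfold E1; nra) ltac:(unfold E2; nra) Hbalance).
  unfold U, util, premium; fold E1 E2; rewrite HE1, HE2; nra.
Qed.

Definition gap (I p : R) : R := U0 Ra varpi p - U alpha f varpi Ra p I.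

(* Both U0 and U(., I) are expectations over the loss event: affine in p. *)
Lemma gap_affine (I p : R) : gap I p = (1 - p) * gap I 0 + p * gap I 1.
Proof. unfold gap, U0, U; ring. Qed.

(* Without a loss, any contract only costs its premium. *)
Lemma gap_no_loss_pos (I : R) : 0 <= I -> 0 < gap I 0.
Proof.
  intros HI; unfold gap, U0, U, util, premium.
  assert (0 < Ra * (alpha * I + f)) by (apply Rmult_lt_0_compat; nra).
  assert (exp (- Ra * varpi) < exp (- Ra * (varpi - (alpha * I + f))))
    by (apply exp_increasing; lra).
  lra.
Qed.

Lemma gap_sure_loss_neg (I : R) :
  0 < I - premium alpha f I -> gap I 1 < 0.
Proof.
  intros Hnet; unfold gap, U0, U, util.
  assert (exp (- Ra * (I - premium alpha f I)) < exp (- Ra * 0))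
    by (apply exp_increasing; nra).
  lra.
Qed.

Lemma gap_no_cover_pos (p : R) : 0 <= p <= 1 -> 0 < gap 0 p.
Proof.
  intros Hp; rewrite gap_affine.
  assert (0 < gap 0 0) by (apply gap_no_loss_pos; lra).
  assert (0 < gap 0 1).
  { unfold gap, U0, U, util, premium.
    assert (exp (- Ra * 0) < exp (- Ra * (0 - (alpha * 0 + f))))
      by (apply exp_increasing; nra).
    lra. }
  nra.
Qed.

Lemma gap_pos_below (I z p : R) :
  0 <= I -> 0 <= gap I z -> 0 <= p < z -> 0 < gap I p.
Proof.
  intros HI Hz Hp; pose proof (gap_no_loss_pos I HI).
  assert (Hinterp : z * gap I p = p * gap I z + (z - p) * gap I 0)
    by (rewrite (gap_affine I p), (gap_affine I z); ring).
  nra.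
Qed.

Lemma gap_neg_above (I z p : R) :
  0 <= I -> gap I z <= 0 -> 0 < z < p -> gap I p < 0.
Proof.
  intros HI Hz Hp; pose proof (gap_no_loss_pos I HI).
  assert (Hinterp : z * gap I p = p * gap I z + (z - p) * gap I 0)
    by (rewrite (gap_affine I p), (gap_affine I z); ring).
  nra.
Qed.

Definition surplus (p : R) : R :=
  U alpha f varpi Ra p (opt_indemnity p) - U0 Ra varpi p.

Lemma surplus_continuous (p : R) : 0 < p < 1 -> continuity_pt surplus p.
Proof.
  intros Hp; apply continuity_pt_filterlim.
  apply (ex_derive_continuous (K := R_AbsRing) (V := R_NormedModule)).
  unfold surplus, U, U0, util, premium, opt_indemnity; auto_derive.
  repeat split; lra.
Qed.

(* For p close to 1, insuring with net payout 1 already beats not insuring. *)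
Lemma surplus_pos_near_one :
  exists q, 0 < q < 1 /\ forall p, q < p < 1 -> 0 < surplus p.
Proof.
  set (T := (1 + f) / (1 - alpha)).
  assert (HT : 0 <= T) by (apply Rlt_le, Rdiv_lt_0_compat; lra).
  assert (H0 : 0 < gap T 0) by (apply gap_no_loss_pos; exact HT).
  assert (H1 : gap T 1 < 0)
    by (apply gap_sure_loss_neg; unfold premium;
        replace (T - (alpha * T + f)) with 1 by (unfold T; field; lra); lra).
  set (q := gap T 0 / (gap T 0 - gap T 1)).
  assert (Hq : 0 < q < 1).
  { unfold q; split; [apply Rdiv_lt_0_compat; lra|].
    apply (Rmult_lt_reg_r (gap T 0 - gap T 1)); [lra|].
    unfold Rdiv; rewrite Rmult_assoc, Rinv_l; lra. }
  assert (Hgq : gap T q = 0)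
    by (rewrite gap_affine; unfold q; field; lra).
  exists q; split; [exact Hq|].
  intros p Hp.
  pose proof (gap_neg_above T q p HT ltac:(lra) ltac:(lra)).
  pose proof (opt_indemnity_max p T ltac:(lra)).
  unfold gap in *; unfold surplus; lra.
Qed.

Lemma threshold_exists :
  exists z, 0 < z < 1 /\ surplus z = 0 /\ 0 < opt_indemnity z.
Proof.
  destruct opt_indemnity_root as [p0 [Hp0 Hroot]].
  destruct surplus_pos_near_one as [q [Hq Hnear]].
  assert (Hs0 : surplus p0 < 0).
  { pose proof (gap_no_cover_pos p0 ltac:(lra)).
    unfold gap in *; unfold surplus; rewrite Hroot; lra. }
  set (p1 := Rmax ((1 + p0) / 2) ((1 + q) / 2)).
  assert (Hp1 : (1 + p0) / 2 <= p1 /\ (1 + q) / 2 <= p1 /\ p1 < 1).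
  { unfold p1; split; [apply Rmax_l|split; [apply Rmax_r|]].
    apply Rmax_lub_lt; lra. }
  assert (Hs1 : 0 < surplus p1) by (apply Hnear; lra).
  destruct (IVT_interv surplus p0 p1) as [z [Hz Hsz]];
    [intros a Ha; apply surplus_continuous; lra | lra | exact Hs0 | exact Hs1 |].
  assert (Hp0z : p0 < z)
    by (destruct (Req_dec p0 z) as [<-|]; [lra | destruct Hz; lra]).
  exists z; split; [lra|]; split; [exact Hsz|].
  rewrite <- Hroot; apply opt_indemnity_increasing; lra.
Qed.

End Model.

Theorem proposition4p1 (alpha f varpi Ra : R)
  (Halpha : 0 < alpha < 1) (Hf : 0 < f) (Hvarpi : 0 < varpi) (HR : 0 < Ra) :
  exists (pstar : R) (Ihat : R -> R),
    0 < pstar < 1 /\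
    (* Ihat is smooth on [pstar,1): C^infinity on an open interval containing it *)
    (exists eps, 0 < eps /\ smooth_on_open (pstar - eps) 1 Ihat) /\
    (* Ihat maps [pstar,1) into (0,+oo) *)
    (forall p, pstar <= p < 1 -> 0 < Ihat p) /\
    (* (1) not insuring is optimal below the threshold *)
    (forall p, 0 < p < pstar ->
       forall I, 0 <= I -> U alpha f varpi Ra p I <= U0 Ra varpi p) /\
    (* (2) indifference at the threshold *)
    (0 < Ihat pstar /\
     (forall I, 0 <= I ->
        U alpha f varpi Ra pstar I <= U alpha f varpi Ra pstar (Ihat pstar)) /\
     U0 Ra varpi pstar = U alpha f varpi Ra pstar (Ihat pstar)) /\
    (* (3) insuring at Ihat p is optimal above the threshold *)
    (forall p, pstar < p < 1 ->
       0 < Ihat p /\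
       (forall I, 0 <= I ->
          U alpha f varpi Ra p I <= U alpha f varpi Ra p (Ihat p)) /\
       U alpha f varpi Ra p (Ihat p) > U0 Ra varpi p).
Proof.
  destruct (threshold_exists alpha f varpi Ra Halpha Hf HR) as [z [Hz [Hsz HIz]]].
  assert (Hpos : forall p, z <= p < 1 -> 0 < opt_indemnity alpha varpi Ra p)
    by (intros p Hp; apply opt_indemnity_pos_above with (z := z); lra).
  assert (Hgap_z : forall I, 0 <= gap alpha f varpi Ra I z).
  { intros I; pose proof (opt_indemnity_max alpha f varpi Ra Halpha HR z I Hz).
    unfold surplus, gap in *; lra. }
  exists z, (opt_indemnity alpha varpi Ra); split; [exact Hz|]; split.
  { exists z; split; [lra|]; replace (z - z) with 0 by ring.
    apply opt_indemnity_smooth; exact HR. }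
  split; [exact Hpos|]; split; [|split].
  - intros p Hp I HI.
    pose proof (gap_pos_below alpha f varpi Ra Halpha Hf HR I z p HI (Hgap_z I)
                  ltac:(lra)).
    unfold gap in *; lra.
  - split; [apply Hpos; lra|]; split.
    + intros I _; apply opt_indemnity_max; assumption.
    + unfold surplus in Hsz; lra.
  - intros p Hp; split; [apply Hpos; lra|]; split.
    + intros I _; apply opt_indemnity_max; lra.
    + (* The threshold contract already beats not insuring beyond z. *)
      pose (Iz := opt_indemnity alpha varpi Ra z).
      assert (Hgap_zz : gap alpha f varpi Ra Iz z <= 0)
        by (unfold Iz, gap, surplus in *; lra).
      pose proof (gap_neg_above alpha f varpi Ra Halpha Hf HR Iz z p
                    ltac:(unfold Iz; lra) Hgap_zz ltac:(lra)).
      pose proof (opt_indemnity_max alpha f varpi Ra Halpha HR p Iz ltac:(lra)).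
      unfold gap in *; lra.
Qed.
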